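(* Let $\Gamma$ be a countable discrete group and $\mu$ a probability measure on $\Gamma$. Let $\eta\in\mathbb T$ and let $0\neq T\in\mathcal B(\ell^2(\Gamma))$ satisfy $\mathcal P_\mu(T)=\eta T$. Then there exists a nonzero $f\in\ell^\infty(\Gamma)$ with $f*\mu=\eta f$. In particular, if $\mu$ is symmetric and generating, then $-1$ is an eigenvalue of $\mathcal P_\mu$ on $\mathcal B(\ell^2(\Gamma))$ if and only if there exists a nonzero $f\in\ell^\infty(\Gamma)$ with $f*\mu=-f$.
   Context: $\rho$ denotes the right regular representation of $\Gamma$ on $\ell^2(\Gamma)$, $\rho_g\delta_x=\delta_{xg^{-1}}$. The Markov operator $\mathcal P_\mu:\mathcal B(\ell^2(\Gamma))\to\mathcal B(\ell^2(\Gamma))$ is $\mathcal P_\mu(T)=\sum_{g\in\Gamma}\mu(g)\rho_gT\rho_g^*$. For $f\in\ell^\infty(\Gamma)$, $(f*\mu)(g)=\sum_{h\in\Gamma}\mu(h)f(gh)$; identifying $f$ with the multiplication operator $M_f$, one has $\mathcal P_\mu(M_f)=M_{f*\mu}$. A measure $\mu$ is symmetric if $\mu(g)=\mu(g^{-1})$ for all $g$, and generating if its support generates $\Gamma$ as a group. *)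

From HB Require Import structures.
From mathcomp Require Import all_boot all_order all_algebra finmap.
From mathcomp Require Import boolp classical_sets reals topology normedtype.
From mathcomp Require Import complex.

Set Implicit Arguments.
Unset Strict Implicit.
Unset Printing Implicit Defensive.
Import Order.TTheory GRing.Theory Num.Theory.
Import numFieldTopology.Exports numFieldNormedType.Exports.
Local Open Scope ring_scope.
Local Open Scope classical_set_scope.

Record is_group (G : Type) (mul : G -> G -> G) (inv : G -> G) (e : G) : Prop := {
  grp_mulA : forall x y z, mul x (mul y z) = mul (mul x y) z;
  grp_mul1g : forall x, mul e x = x;
  grp_mulg1 : forall x, mul x e = x;
  grp_mulVg : forall x, mul (inv x) x = e;
  grp_mulgV : forall x, mul x (inv x) = e }.

Definition is_subgroup (G : Type) (mul : G -> G -> G) (inv : G -> G) (e : G)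
  (H : G -> Prop) : Prop :=
  H e /\ (forall x y, H x -> H y -> H (mul x y)) /\ (forall x, H x -> H (inv x)).

Definition in_gen (G : Type) (mul : G -> G -> G) (inv : G -> G) (e : G)
  (S : G -> Prop) (x : G) : Prop :=
  forall H : G -> Prop, is_subgroup mul inv e H -> (forall s, S s -> H s) -> H x.

Definition totally {I : choiceType} : set_system {fset I} :=
  filter_from setT (fun A => [set B | (A `<=` B)%fset]).

Definition partial_sum {I : choiceType} {V : zmodType} (x : I -> V) (A : {fset I}) : V :=
  \sum_(i <- A) x i.

Definition rsum_to {I : choiceType} {R : realType} (f : I -> R) (s : R) : Prop :=
  partial_sum f @ totally --> s.

Definition csum_to {I : choiceType} {R : realType} (f : I -> R[i]) (s : R[i]) : Prop :=
  rsum_to (fun i => complex.Re (f i)) (complex.Re s) /\ rsum_to (fun i => complex.Im (f i)) (complex.Im s).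

(* value of the sum (meaningful when it converges) *)
Definition csum {I : choiceType} {R : realType} (f : I -> R[i]) : R[i] :=
  Complex (lim (partial_sum (fun i => complex.Re (f i)) @ totally))
          (lim (partial_sum (fun i => complex.Im (f i)) @ totally)).

Definition csqnorm {R : realType} (z : R[i]) : R := complex.Re z ^+ 2 + complex.Im z ^+ 2.

Definition prob_measure {G : choiceType} {R : realType} (mu : G -> R) : Prop :=
  (forall g, 0 <= mu g) /\ rsum_to mu 1.

Definition symmetric_measure {G : Type} {R : realType} (inv : G -> G) (mu : G -> R) :=
  forall g, mu (inv g) = mu g.

Definition generating_measure {G : Type} {R : realType}
  (mul : G -> G -> G) (inv : G -> G) (e : G) (mu : G -> R) :=
  forall x, in_gen mul inv e (fun g => mu g != 0) x.

Definition l2sq {G : choiceType} {R : realType} (a : G -> R[i]) (s : R) : Prop :=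
  rsum_to (fun x => csqnorm (a x)) s.

Definition in_l2 {G : choiceType} {R : realType} (a : G -> R[i]) : Prop :=
  exists s, l2sq a s.

Definition l2_inner {G : choiceType} {R : realType} (u v : G -> R[i]) : R[i] :=
  csum (fun x => u x * conjc (v x)).

Definition in_linfty {G : Type} {R : realType} (f : G -> R[i]) : Prop :=
  exists M : R, forall g, csqnorm (f g) <= M.

(* an operator is given by its action on l^2 vectors (values outside l^2 are irrelevant) *)
Definition bounded_op {G : choiceType} {R : realType}
  (T : (G -> R[i]) -> (G -> R[i])) : Prop :=
  (forall a b (c : R[i]), in_l2 a -> in_l2 b ->
     T (fun x => a x + c * b x) = (fun x => T a x + c * T b x)) /\
  (exists K : R, forall a s, l2sq a s -> exists t, l2sq (T a) t /\ t <= K * s).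

Definition nonzero_op {G : choiceType} {R : realType}
  (T : (G -> R[i]) -> (G -> R[i])) : Prop :=
  exists a, in_l2 a /\ exists x, T a x != 0.

(* right regular representation: (rho_g a)(x) = a(x g), so rho_g delta_x = delta_{x g^-1};
   its adjoint rho_g^* = rho_{g^-1} : (rho_g^* a)(x) = a(x g^-1) *)
Definition rho {G : Type} {R : realType} (mul : G -> G -> G) (g : G)
  (a : G -> R[i]) : G -> R[i] := fun x => a (mul x g).

Definition rho_adj {G : Type} {R : realType} (mul : G -> G -> G) (inv : G -> G) (g : G)
  (a : G -> R[i]) : G -> R[i] := fun x => a (mul x (inv g)).

(* P_mu(T) = eta T, where P_mu(T) = sum_g mu(g) rho_g T rho_g^* (weak-operator convergent sum):
   for all a, b in l^2, sum_g mu(g) <rho_g T rho_g^* a, b> = eta <T a, b> *)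
Definition Pmu_eigen {G : choiceType} {R : realType} (mul : G -> G -> G) (inv : G -> G)
  (mu : G -> R) (T : (G -> R[i]) -> (G -> R[i])) (eta : R[i]) : Prop :=
  forall a b, in_l2 a -> in_l2 b ->
    csum_to (fun g => ((mu g)%:C)%C * l2_inner (rho mul g (T (rho_adj mul inv g a))) b)
            (eta * l2_inner (T a) b).

(* f * mu = eta f, with (f * mu)(g) = sum_h mu(h) f(g h) *)
Definition conv_eigen {G : choiceType} {R : realType} (mul : G -> G -> G)
  (mu : G -> R) (f : G -> R[i]) (eta : R[i]) : Prop :=
  forall g, csum_to (fun h => ((mu h)%:C)%C * f (mul g h)) (eta * f g).

From HB Require Import structures.
From mathcomp Require Import all_boot all_order all_algebra finmap.
From mathcomp Require Import boolp classical_sets reals topology normedtype.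
From mathcomp Require Import complex.
From mathcomp Require Import lra ring.
Import Order.TTheory GRing.Theory Num.Theory.
Import numFieldTopology.Exports numFieldNormedType.Exports.
Set Implicit Arguments.
Unset Strict Implicit.
Local Open Scope ring_scope.
Local Open Scope classical_set_scope.

(* (=>) If P_mu(T) = eta T with T a nonzero bounded operator, pick a in l^2
   and x0 with (T a)(x0) <> 0 and put f(g) := <rho_g T rho_g^* a, delta_x0>
   = (T rho_g^* a)(x0 g).  Testing P_mu(T) = eta T against the vectors
   rho_g^* a and delta_{x0 g} gives exactly (f * mu)(g) = eta f(g); f is
   bounded by ||T|| ||a||^2 and f(e) = (T a)(x0) <> 0.
   (<=) Conversely, if f * mu = eta f with f bounded and nonzero, then the
   multiplication operator M_f is bounded, nonzero and P_mu(M_f) = eta M_f: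
   the matrix coefficient of P_mu(M_f) between a and b is the double sum
   sum_g mu(g) sum_x f(x g) a(x) conj b(x), and exchanging the two sums turns
   it into sum_x (f * mu)(x) a(x) conj b(x) = eta <M_f a, b>.
   The second statement (eta = -1, under symmetry and generation) is the
   conjunction of the two directions. *)

Section UnorderedSums.
Context {I : choiceType} {R : realType}.
Implicit Types (f g V W : I -> R) (A B : {fset I}).

#[global] Instance totally_filter : ProperFilter (@totally I).
Proof.
eapply filter_from_proper; last by move=> A _; exists A; rewrite /= fsubset_refl.
apply: filter_fromT_filter; first by exists fset0.
by move=> A B /=; exists (A `|` B)%fset => P /=; rewrite fsubUset => /andP[].
Qed.

Lemma rsumP f s : rsum_to f s <->
  (forall e : R, 0 < e -> exists A, forall B, (A `<=` B)%fset -> `|s - partial_sum f B| < e).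
Proof.
split => [/cvgrPdist_lt H e /H [A _ HA]|H]; first by exists A => B /HA.
by apply/cvgrPdist_lt => e /H [A HA]; exists A => // B /HA.
Qed.

Lemma rsum_lim f s : rsum_to f s -> lim (partial_sum f @ totally) = s.
Proof. exact: cvg_lim. Qed.

Lemma rsum_ext f g s : f =1 g -> rsum_to f s -> rsum_to g s.
Proof. by move=> /funext ->. Qed.

Lemma ps_split f A B : (A `<=` B)%fset ->
  partial_sum f B = partial_sum f A + partial_sum f (B `\` A)%fset.
Proof.
move=> AB; rewrite /partial_sum (big_fsetID _ (mem A)) /=.
congr (_ + _); apply: eq_fbigl => x; rewrite !inE /=.
  by apply/andP/idP => [[] //|xA]; split=> //; apply: (fsubsetP AB).
by rewrite andbC.
Qed.

Lemma ps_add f g A : partial_sum (fun x => f x + g x) A = partial_sum f A + partial_sum g A.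
Proof. exact: big_split. Qed.

Lemma ps_scale (c : R) f A : partial_sum (fun x => c * f x) A = c * partial_sum f A.
Proof. by rewrite /partial_sum mulr_sumr. Qed.

Lemma ps_opp f A : partial_sum (fun x => - f x) A = - partial_sum f A.
Proof. exact: sumrN. Qed.

Lemma ps_norm f A : `|partial_sum f A| <= partial_sum (fun x => `|f x|) A.
Proof. exact: ler_norm_sum. Qed.

Lemma ps_le f g A : (forall x, f x <= g x) -> partial_sum f A <= partial_sum g A.
Proof. by move=> fg; apply: ler_sum => x _. Qed.

Lemma ps_single f y : partial_sum f [fset y]%fset = f y.
Proof. exact: big_seq_fset1. Qed.

Lemma ps_mono f A B : (forall x, 0 <= f x) -> (A `<=` B)%fset ->
  partial_sum f A <= partial_sum f B.
Proof. by move=> f0 AB; rewrite (ps_split f AB) lerDl sumr_ge0. Qed.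

Lemma ps_le_bound f s M : rsum_to f s -> (forall A, partial_sum f A <= M) -> s <= M.
Proof.
move=> /rsumP H HM; apply/ler_addgt0Pr => e e0.
have [A HA] := H e e0; have := HA A (fsubset_refl _).
move: (HM A); rewrite ltr_norml => h1 /andP[h2 h3]; lra.
Qed.

Lemma ps_norm_bound f s M : rsum_to f s -> (forall A, `|partial_sum f A| <= M) -> `|s| <= M.
Proof.
move=> /rsumP H HM; apply/ler_addgt0Pr => e e0.
have [A HA] := H e e0; have := HA A (fsubset_refl _).
have : `|s| <= `|s - partial_sum f A| + `|partial_sum f A|.
  by rewrite -{1}(subrK (partial_sum f A) s) ler_normD.
by have := HM A; lra.
Qed.

Lemma ps_le_lim f s A : (forall x, 0 <= f x) -> rsum_to f s -> partial_sum f A <= s.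
Proof.
move=> f0 /rsumP H; apply/ler_addgt0Pr => e e0.
have [B HB] := H e e0; have := HB (A `|` B)%fset (fsubsetUr _ _).
have := ps_mono f0 (fsubsetUl A B); rewrite ltr_norml => h1 /andP[h2 h3]; lra.
Qed.

(* Monotone convergence: a nonnegative family with bounded partial sums is
   summable (its sum is the supremum of the partial sums). *)
Lemma monotone_cvg f M : (forall x, 0 <= f x) -> (forall A, partial_sum f A <= M) ->
  exists s, rsum_to f s.
Proof.
move=> f0 HM; set E := range (partial_sum f).
have hsup : has_sup E.
  by split; [exists (partial_sum f fset0), fset0|exists M => _ [A _ <-]].
exists (sup E); apply/rsumP => e e0.
have [_ [A _ <-] HA] := sup_adherent e0 hsup.
exists A => B AB; have h1 := ps_mono f0 AB.
have h2 : partial_sum f B <= sup E by apply: ub_le_sup; [exact: hsup.2|exists B].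
rewrite ltr_norml; apply/andP; split; lra.
Qed.

Lemma rsum_add f g s t : rsum_to f s -> rsum_to g t -> rsum_to (fun x => f x + g x) (s + t).
Proof.
move=> hf hg; rewrite /rsum_to.
rewrite (_ : partial_sum _ = fun A => partial_sum f A + partial_sum g A).
  exact: cvgD.
by apply: funext => A; rewrite ps_add.
Qed.

Lemma rsum_scale (c : R) f s : rsum_to f s -> rsum_to (fun x => c * f x) (c * s).
Proof.
move=> hf; rewrite /rsum_to (_ : partial_sum _ = fun A => c * partial_sum f A).
  exact: cvgMl_tmp.
by apply: funext => A; rewrite ps_scale.
Qed.

Lemma rsum_opp f s : rsum_to f s -> rsum_to (fun x => - f x) (- s).
Proof.
by move=> /(rsum_scale (c := -1)); rewrite mulN1r; apply: rsum_ext => x; rewrite mulN1r.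
Qed.

(* Dominated convergence: a family dominated by a summable one is summable
   (write W = (|W| + W) - |W| as a difference of two monotone limits). *)
Lemma dominated_cvg W V S : (forall x, `|W x| <= V x) -> rsum_to V S ->
  exists s, rsum_to W s.
Proof.
move=> WV hV.
have V0 x : 0 <= V x by apply: le_trans (WV x).
have [p hp] : exists p, rsum_to (fun x => `|W x| + W x) p.
  apply: (@monotone_cvg _ (2 * S)) => [x|A].
    by have := ler_norm (- W x); rewrite normrN; lra.
  have h x : `|W x| + W x <= 2 * V x by have := WV x; have := ler_norm (W x); lra.
  by apply: le_trans (ps_le A h) _; rewrite ps_scale ler_wpM2l // ps_le_lim.
have [q hq] : exists q, rsum_to (fun x => `|W x|) q.
  apply: (@monotone_cvg _ S) => [x|A] //.
  by apply: le_trans (ps_le _ WV) _; apply: ps_le_lim.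
exists (p - q); have := rsum_add hp (rsum_opp hq).
by apply: rsum_ext => x; lra.
Qed.

Lemma tail_small V S (e : R) : (forall x, 0 <= V x) -> rsum_to V S -> 0 < e ->
  exists X0, forall B, (X0 `<=` B)%fset -> partial_sum V (B `\` X0)%fset <= e.
Proof.
move=> V0 hV e0; have [X0 HX] := (rsumP _ _).1 hV e e0.
exists X0 => B XB; have := HX X0 (fsubset_refl _).
have := ps_le_lim B V0 hV; rewrite (ps_split V XB) ltr_norml => h1 /andP[h2 h3]; lra.
Qed.

Lemma tail_lim W V s X0 (e : R) : (forall x, `|W x| <= V x) -> rsum_to W s ->
  (forall B, (X0 `<=` B)%fset -> partial_sum V (B `\` X0)%fset <= e) ->
  `|s - partial_sum W X0| <= e.
Proof.
move=> WV /rsumP hW HX; apply/ler_addgt0Pr => d d0.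
have [B1 HB1] := hW d d0; set B := (X0 `|` B1)%fset.
have h1 := HB1 B (fsubsetUr _ _); have h2 := HX B (fsubsetUl _ _).
have h3 := le_trans (ps_norm W (B `\` X0)%fset) (ps_le _ WV).
rewrite (ps_split W (fsubsetUl X0 B1)) in h1.
set a := partial_sum W X0 in h1 *; set b := partial_sum W (B `\` X0)%fset in h1 h3 *.
have : `|s - a| <= `|s - (a + b)| + `|b|.
  by rewrite (_ : s - a = (s - (a + b)) + b); [exact: ler_normD|lra].
lra.
Qed.

Lemma rsum_single f y : (forall x, x != y -> f x = 0) -> rsum_to f (f y).
Proof.
move=> f0; apply/rsumP => e e0; exists [fset y]%fset => B yB.
have yB' : y \in B by apply: (fsubsetP yB); rewrite inE.
rewrite /partial_sum (big_fsetD1 y yB') /= big1_seq ?addr0 ?subrr ?normr0 //.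
by move=> x /andP[_]; rewrite !inE => /andP[xy _]; apply: f0.
Qed.

Lemma rsum_reindex f s (sg tau : I -> I) :
  cancel tau sg -> injective sg -> rsum_to f s -> rsum_to (fun x => f (sg x)) s.
Proof.
move=> st inj /rsumP H; apply/rsumP => e e0; have [A HA] := H e e0.
exists [fset tau x | x in A]%fset => B HB.
have -> : partial_sum (fun x => f (sg x)) B = partial_sum f [fset sg x | x in B]%fset.
  by rewrite /partial_sum big_imfset //= => x y _ _; apply: inj.
apply: HA; apply/fsubsetP => x xA; apply/imfsetP; exists (tau x) => //.
by apply: (fsubsetP HB); apply/imfsetP; exists x.
Qed.

End UnorderedSums.

Section Exchange.
Context {I J : choiceType} {R : realType}.

Lemma cvg_finsum (X : seq I) (u : I -> {fset J} -> R) (c : I -> R) :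
  (forall x, u x @ totally --> c x) ->
  (fun B => \sum_(x <- X) u x B) @ totally --> \sum_(x <- X) c x.
Proof.
move=> hu; elim: X => [|x X IH].
  rewrite big_nil (_ : (fun B => _) = fun _ => 0); first exact: cvg_cst.
  by apply: funext => B; rewrite big_nil.
rewrite big_cons (_ : (fun B => _) = fun B => u x B + \sum_(y <- X) u y B).
  exact: cvgD.
by apply: funext => B; rewrite big_cons.
Qed.

Variables (mu : J -> R) (V : I -> R) (SV : R).
Hypotheses (mu0 : forall g, 0 <= mu g) (mu1 : rsum_to mu 1).
Hypotheses (V0 : forall x, 0 <= V x) (hV : rsum_to V SV).

Lemma average_dominated (K : J -> I -> R) (c : I -> R) x :
  (forall g, `|K g x| <= V x) -> rsum_to (fun g => mu g * K g x) (c x) -> `|c x| <= V x.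
Proof.
move=> KV hc; apply: (ps_norm_bound hc) => A.
apply: le_trans (ps_norm _ _) _.
apply: le_trans (ps_le (g := fun g => V x * mu g) A _) _.
  by move=> g; rewrite normrM ger0_norm // mulrC ler_wpM2r.
by rewrite ps_scale -[leRHS]mulr1 ler_wpM2l ?ps_le_lim.
Qed.

Lemma rsum_truncated (K : J -> I -> R) (c : I -> R) (X0 : {fset I}) :
  (forall x, rsum_to (fun g => mu g * K g x) (c x)) ->
  rsum_to (fun g => mu g * partial_sum (K g) X0) (partial_sum c X0).
Proof.
move=> hc; rewrite /rsum_to (_ : partial_sum _ =
    fun B => \sum_(x <- X0) partial_sum (fun g => mu g * K g x) B).
  exact: cvg_finsum.
apply: funext => B; rewrite /partial_sum exchange_big /=.
by apply: eq_bigr => g _; rewrite mulr_sumr.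
Qed.

(* Truncate the x-sum to a finite X0 with
   V-tail at most eps; on X0 exchange finite sums, and the truncation costs
   at most eps on either side because mu has total mass one. *)
Lemma rsum_exchange (K : J -> I -> R) (c : I -> R) :
  (forall g x, `|K g x| <= V x) -> (forall x, rsum_to (fun g => mu g * K g x) (c x)) ->
  rsum_to (fun g => mu g * lim (partial_sum (K g) @ totally)) (lim (partial_sum c @ totally)).
Proof.
move=> KV hc.
have cV x : `|c x| <= V x := average_dominated (KV^~ x) (hc x).
have [L hL] := dominated_cvg cV hV; rewrite (rsum_lim hL).
set Jg := fun g => lim (partial_sum (K g) @ totally).
have hK g : rsum_to (K g) (Jg g).
  by have [s hs] := dominated_cvg (KV g) hV; rewrite /Jg (rsum_lim hs).
apply/rsumP => e e0; set eps := e / 3.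
have eps0 : 0 < eps by rewrite divr_gt0.
have [X0 HX0] := tail_small V0 hV eps0.
have tailK g : `|Jg g - partial_sum (K g) X0| <= eps := tail_lim (KV g) (hK g) HX0.
have tailc : `|L - partial_sum c X0| <= eps := tail_lim cV hL HX0.
have [B0 HB0] := (rsumP _ _).1 (rsum_truncated (X0 := X0) hc) eps eps0.
exists B0 => B /HB0; set S0 := partial_sum _ B => hS0.
have hJ : `|S0 - partial_sum (fun g => mu g * Jg g) B| <= eps.
  rewrite -ps_opp -ps_add; apply: le_trans (ps_norm _ _) _.
  apply: le_trans (ps_le (g := fun g => eps * mu g) B _) _.
    move=> g; rewrite -mulrBr normrM ger0_norm // mulrC ler_wpM2r //.
    by rewrite distrC.
  by rewrite ps_scale -[leRHS]mulr1 ler_wpM2l ?ps_le_lim // ltW.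
set T := partial_sum (fun g => mu g * Jg g) B in hJ *.
have := ler_distD (partial_sum c X0) L T; have := ler_distD S0 (partial_sum c X0) T.
rewrite /eps in tailc hS0 hJ *; lra.
Qed.

End Exchange.

Section ComplexSums.
Context {R : realType}.
Implicit Types (z w : R[i]).

Lemma ReM z w : complex.Re (z * w) = complex.Re z * complex.Re w - complex.Im z * complex.Im w.
Proof. by case: z => ? ?; case: w. Qed.

Lemma ImM z w : complex.Im (z * w) = complex.Re z * complex.Im w + complex.Im z * complex.Re w.
Proof. by case: z => ? ?; case: w. Qed.

Lemma ReC (r : R) z : complex.Re ((r%:C)%C * z) = r * complex.Re z.
Proof. by rewrite ReM /=; lra. Qed.

Lemma ImC (r : R) z : complex.Im ((r%:C)%C * z) = r * complex.Im z.
Proof. by rewrite ImM /=; lra. Qed.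

Lemma csqnorm_ge0 z : 0 <= csqnorm z.
Proof. by rewrite /csqnorm addr_ge0 // sqr_ge0. Qed.

Lemma csqnormM z w : csqnorm (z * w) = csqnorm z * csqnorm w.
Proof. by rewrite /csqnorm ReM ImM; ring. Qed.

Lemma csqnormJ z : csqnorm (conjc z) = csqnorm z.
Proof. by case: z => x y; rewrite /csqnorm /= sqrrN. Qed.

Definition cdominated {I : Type} (h : I -> R[i]) (V : I -> R) : Prop :=
  forall x, `|complex.Re (h x)| <= V x /\ `|complex.Im (h x)| <= V x.

Lemma sqr_le_bound (t M p q : R) : 0 <= M -> 0 <= p -> 0 <= q ->
  t ^+ 2 <= M * (p * q) -> `|t| <= (M + 1) * (p + q).
Proof.
move=> M0 p0 q0 ht; rewrite -(@ler_pXn2r _ 2) ?nnegrE ?mulr_ge0 ?addr_ge0 //.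
have hpq : p * q <= (p + q) ^+ 2 by rewrite sqrrD; nra.
have hM : M * (p * q) <= (M + 1) ^+ 2 * (p + q) ^+ 2.
  by apply: ler_pM; rewrite ?mulr_ge0 //; nra.
by rewrite real_normK ?num_real // exprMn; apply: le_trans hM.
Qed.

(* Pointwise bound behind the domination of the coefficients of a
   multiplication operator: if |z|^2 <= M then z a conj(b) is controlled by
   (M + 1)(|a|^2 + |b|^2), since its squared modulus is |z|^2 |a|^2 |b|^2. *)
Lemma product_bound (M : R) z a b : 0 <= M -> csqnorm z <= M ->
  `|complex.Re (z * a * conjc b)| <= (M + 1) * (csqnorm a + csqnorm b) /\
  `|complex.Im (z * a * conjc b)| <= (M + 1) * (csqnorm a + csqnorm b).
Proof.
move=> M0 hz; set u := z * a * conjc b.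
have hu : csqnorm u <= M * (csqnorm a * csqnorm b).
  by rewrite /u !csqnormM csqnormJ -mulrA ler_wpM2r // mulr_ge0 ?csqnorm_ge0.
split; apply: sqr_le_bound; rewrite ?csqnorm_ge0 //; apply: le_trans hu.
  by rewrite /csqnorm lerDl sqr_ge0.
by rewrite /csqnorm lerDr sqr_ge0.
Qed.

Lemma csum_toE {I : choiceType} (h : I -> R[i]) s : csum_to h s -> csum h = s.
Proof. by case=> hr hi; rewrite /csum (rsum_lim hr) (rsum_lim hi); case: s {hr hi}. Qed.

Lemma csum_to_ext {I : choiceType} (h1 h2 : I -> R[i]) s :
  h1 =1 h2 -> csum_to h1 s -> csum_to h2 s.
Proof. by move=> /funext ->. Qed.

Lemma csum_to_scale {I : choiceType} z (h : I -> R[i]) s :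
  csum_to h s -> csum_to (fun i => z * h i) (z * s).
Proof.
case=> hr hi; split.
- have := rsum_add (rsum_scale (c := complex.Re z) hr) (rsum_scale (c := - complex.Im z) hi).
  by rewrite ReM -mulNr; apply: rsum_ext => i; rewrite ReM mulNr.
- have := rsum_add (rsum_scale (c := complex.Re z) hi) (rsum_scale (c := complex.Im z) hr).
  by rewrite ImM; apply: rsum_ext => i; rewrite ImM.
Qed.

Lemma csum_dominated {I : choiceType} (h : I -> R[i]) V S :
  cdominated h V -> rsum_to V S -> exists s, csum_to h s.
Proof.
move=> hV sV.
have [sr hr] := dominated_cvg (fun x => (hV x).1) sV.
have [si hi] := dominated_cvg (fun x => (hV x).2) sV.
by exists (Complex sr si).
Qed.

Lemma csum_exchange {I J : choiceType} (mu : J -> R) (K : J -> I -> R[i]) V SV c :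
  (forall g, 0 <= mu g) -> rsum_to mu 1 -> (forall x, 0 <= V x) -> rsum_to V SV ->
  (forall g, cdominated (K g) V) ->
  (forall x, csum_to (fun g => (mu g)%:C%C * K g x) (c x)) ->
  csum_to (fun g => (mu g)%:C%C * csum (K g)) (csum c).
Proof.
move=> mu0 mu1 V0 hV KV hc; split.
- have hcRe x := rsum_ext (fun g => ReC _ _) (hc x).1.
  have := rsum_exchange mu0 mu1 V0 hV (fun g x => (KV g x).1) hcRe.
  by apply: rsum_ext => g; rewrite ReC.
- have hcIm x := rsum_ext (fun g => ImC _ _) (hc x).2.
  have := rsum_exchange mu0 mu1 V0 hV (fun g x => (KV g x).2) hcIm.
  by apply: rsum_ext => g; rewrite ImC.
Qed.

End ComplexSums.

Section Basis.
Context {G : choiceType} {R : realType}.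

Definition dlt (y : G) : G -> R[i] := fun x => if x == y then 1 else 0.

Lemma csum_single (h : G -> R[i]) y : (forall x, x != y -> h x = 0) -> csum h = h y.
Proof.
move=> h0; apply: csum_toE.
by split; apply: rsum_single => x /h0 ->.
Qed.

Lemma l2_inner_dlt (u : G -> R[i]) y : l2_inner u (dlt y) = u y.
Proof.
rewrite /l2_inner (@csum_single _ y); first by rewrite /dlt eqxx conjc1 mulr1.
by move=> x xy; rewrite /dlt (negbTE xy) conjc0 mulr0.
Qed.

Lemma in_l2_dlt y : in_l2 (dlt y).
Proof.
exists (csqnorm (dlt y y)); apply: rsum_single => x xy.
by rewrite /dlt (negbTE xy) /csqnorm /= expr0n addr0.
Qed.

Lemma csqnorm_le_l2sq (u : G -> R[i]) t z : l2sq u t -> csqnorm (u z) <= t.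
Proof.
move=> h; rewrite -(ps_single (fun x => csqnorm (u x)) z).
by apply: ps_le_lim h => x; apply: csqnorm_ge0.
Qed.

End Basis.

Section Group.
Variables (G : choiceType) (mul : G -> G -> G) (inv : G -> G) (e : G).
Hypothesis hG : is_group mul inv e.

Lemma mulgK x g : mul (mul x g) (inv g) = x.
Proof. by rewrite -(grp_mulA hG) (grp_mulgV hG) (grp_mulg1 hG). Qed.

Lemma mulgVK x g : mul (mul x (inv g)) g = x.
Proof. by rewrite -(grp_mulA hG) (grp_mulVg hG) (grp_mulg1 hG). Qed.

Lemma inv_e : inv e = e.
Proof. by rewrite -[inv e](grp_mulg1 hG) (grp_mulVg hG). Qed.

Lemma inv_mul g h : inv (mul g h) = mul (inv h) (inv g).
Proof.
have E : mul (mul g h) (mul (inv h) (inv g)) = e.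
  by rewrite (grp_mulA hG) mulgK (grp_mulgV hG).
by rewrite -[inv (mul g h)](grp_mulg1 hG) -E (grp_mulA hG) (grp_mulVg hG) (grp_mul1g hG).
Qed.

Variable R : realType.
Implicit Type a : G -> R[i].

Lemma rho_adj_comp a g h :
  rho_adj mul inv h (rho_adj mul inv g a) = rho_adj mul inv (mul g h) a.
Proof. by apply: funext => x; rewrite /rho_adj inv_mul (grp_mulA hG). Qed.

Lemma rho_adj_e a : rho_adj mul inv e a = a.
Proof. by apply: funext => x; rewrite /rho_adj inv_e (grp_mulg1 hG). Qed.

Lemma l2sq_rho_adj a s g : l2sq a s -> l2sq (rho_adj mul inv g a) s.
Proof.
apply: (rsum_reindex (tau := fun x => mul x g)) => [x|x y /(congr1 (mul^~ g))].
  exact: mulgK.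
by rewrite !mulgVK.
Qed.

End Group.

Section Eigenvectors.
Variables (G : choiceType) (mul : G -> G -> G) (inv : G -> G) (e : G) (R : realType).
Hypothesis hG : is_group mul inv e.
Variable mu : G -> R.

(* (=>) If P_mu(T) = eta T, then f(g) := (T rho_g^* a)(x0 g) satisfies
   f * mu = eta f: this is P_mu(T) = eta T tested on rho_g^* a and
   delta_{x0 g}. *)
Lemma eigenfunction_of_eigenoperator (eta : R[i]) (T : (G -> R[i]) -> (G -> R[i])) :
  bounded_op T -> nonzero_op T -> Pmu_eigen mul inv mu T eta ->
  exists f : G -> R[i], in_linfty f /\ (exists g, f g != 0) /\ conv_eigen mul mu f eta.
Proof.
move=> [_ [K hK]] [a [[s ha] [x0 hx0]]] hP.
have ha' g := l2sq_rho_adj hG g ha.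
exists (fun g => T (rho_adj mul inv g a) (mul x0 g)); split; [|split].
- exists (K * s) => g; have [t [ht tK]] := hK _ _ (ha' g).
  exact: le_trans (csqnorm_le_l2sq _ ht) tK.
- by exists e; rewrite (rho_adj_e hG) (grp_mulg1 hG).
- move=> g; have := hP _ _ (ex_intro _ s (ha' g)) (in_l2_dlt (mul x0 g)).
  rewrite l2_inner_dlt; congr csum_to; apply: funext => h.
  by rewrite l2_inner_dlt /rho (rho_adj_comp hG) (grp_mulA hG).
Qed.

Definition mult_op (f : G -> R[i]) : (G -> R[i]) -> (G -> R[i]) := fun u x => f x * u x.

Lemma mult_op_bounded f M :
  0 <= M -> (forall x, csqnorm (f x) <= M) -> bounded_op (mult_op f).
Proof.
move=> M0 hM; split=> [a b c _ _|]; first by apply: funext => x; rewrite /mult_op; ring.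
exists M => a s ha.
have hps A : partial_sum (fun x => csqnorm (f x * a x)) A <= M * s.
  apply: le_trans (ps_le (g := fun x => M * csqnorm (a x)) A _) _.
    by move=> x; rewrite csqnormM ler_wpM2r ?csqnorm_ge0.
  by rewrite ps_scale ler_wpM2l // (ps_le_lim _ (fun x => csqnorm_ge0 _) ha).
have [t ht] := monotone_cvg (fun x => csqnorm_ge0 _) hps.
by exists t; split => //; apply: ps_le_bound ht hps.
Qed.

Lemma mult_op_nonzero f g : f g != 0 -> nonzero_op (mult_op f).
Proof.
move=> fg; exists (dlt g); split; first exact: in_l2_dlt.
by exists g; rewrite /mult_op /dlt eqxx mulr1.
Qed.

Hypothesis prob_mu : prob_measure mu.

(* (<=) If f * mu = eta f with f bounded, then P_mu(M_f) = eta M_f: the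
   coefficient sum_g mu(g) <rho_g M_f rho_g^* a, b> is the iterated sum
   sum_g mu(g) sum_x f(x g) a(x) conj b(x), dominated by
   (M + 1)(|a|^2 + |b|^2); exchanging the sums yields
   sum_x (f * mu)(x) a(x) conj b(x) = eta <M_f a, b>. *)
Lemma mult_op_Pmu_eigen f M (eta : R[i]) : 0 <= M -> (forall x, csqnorm (f x) <= M) ->
  conv_eigen mul mu f eta -> Pmu_eigen mul inv mu (mult_op f) eta.
Proof.
move=> M0 hM hconv a b [sa ha] [sb hb]; have [mu0 mu1] := prob_mu.
set V := fun x => (M + 1) * (csqnorm (a x) + csqnorm (b x)).
have V0 x : 0 <= V x by apply: mulr_ge0; [lra | apply: addr_ge0; apply: csqnorm_ge0].
have hV : rsum_to V ((M + 1) * (sa + sb)) by apply/rsum_scale/rsum_add.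
have domK g : cdominated (fun x => f (mul x g) * a x * conjc (b x)) V.
  by move=> x; apply: product_bound.
have dom0 : cdominated (fun x => f x * a x * conjc (b x)) V.
  by move=> x; apply: product_bound.
have [s hs] := csum_dominated dom0 hV.
have hc x : csum_to (fun g => (mu g)%:C%C * (f (mul x g) * a x * conjc (b x)))
                    (eta * (f x * a x * conjc (b x))).
  rewrite (_ : eta * _ = a x * conjc (b x) * (eta * f x)); last by ring.
  by apply: csum_to_ext (csum_to_scale _ (hconv x)) => g; ring.
rewrite /l2_inner /mult_op (csum_toE hs) -(csum_toE (csum_to_scale eta hs)).
apply: csum_to_ext (csum_exchange mu0 mu1 V0 hV domK hc) => g.
by congr (_ * csum _); apply: funext => x; rewrite /rho /rho_adj (mulgK hG).
Qed.

End Eigenvectors.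

Theorem proposition2p1 (G : countType) (mul : G -> G -> G) (inv : G -> G) (e : G)
    (R : realType) (mu : G -> R) :
  is_group mul inv e -> prob_measure mu ->
  (forall (eta : R[i]) (T : (G -> R[i]) -> (G -> R[i])),
      csqnorm eta = 1 -> bounded_op T -> nonzero_op T -> Pmu_eigen mul inv mu T eta ->
      exists f : G -> R[i], in_linfty f /\ (exists g, f g != 0) /\ conv_eigen mul mu f eta) /\
  (symmetric_measure inv mu -> generating_measure mul inv e mu ->
     ((exists T : (G -> R[i]) -> (G -> R[i]),
          bounded_op T /\ nonzero_op T /\ Pmu_eigen mul inv mu T (-1)) <->
      (exists f : G -> R[i], in_linfty f /\ (exists g, f g != 0) /\ conv_eigen mul mu f (-1)))).
Proof.
move=> hG hmu; split=> [eta T _|_ _].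
  exact: (eigenfunction_of_eigenoperator (R := R) hG).
split=> [[T [hT [hnz hP]]]|[f [[M hM] [[g fg] hconv]]]].
  exact: (eigenfunction_of_eigenoperator (R := R) hG hT hnz hP).
have M0 : 0 <= M := le_trans (csqnorm_ge0 (f g)) (hM g).
exists (mult_op f); split; first exact: mult_op_bounded M0 hM.
split; first exact: mult_op_nonzero fg.
exact: (mult_op_Pmu_eigen (R := R) hG hmu M0 hM hconv).
Qed.
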